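(* Let $q$ be a prime power with $q\equiv 3\pmod 4$ and $m>1$ an odd integer. Then there exists a strongly regular Cayley graph with parameters $(q^{2m},\,r(q^m+1),\,-q^m+r^2+3r,\,r^2+r)$, where $r=q^{m-1}(q-1)/2$.
   Context: A Cayley graph $\mathrm{Cay}(G,D)$ on an additive group $G$ with $0\notin D=-D$ has vertex set $G$, with $x\sim y$ iff $x-y\in D$. A strongly regular graph with parameters $(v,k,\lambda,\mu)$ is a regular graph of valency $k$ on $v$ vertices, neither complete nor edgeless, in which any two adjacent vertices have exactly $\lambda$ common neighbours and any two non-adjacent vertices have exactly $\mu$ common neighbours. *)

From HB Require Import structures.
From mathcomp Require Import all_boot all_order all_algebra.
Set Implicit Arguments. Unset Strict Implicit. Unset Printing Implicit Defensive.
Import GRing.Theory Num.Theory.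
Local Open Scope ring_scope.

Definition cay_adj (G : finZmodType) (D : {set G}) : rel G :=
  fun x y => (x - y) \in D.

Definition cayley_set (G : finZmodType) (D : {set G}) : Prop :=
  0 \notin D /\ [set - x | x in D] = D.

Definition nbhd (T : finType) (adj : rel T) (x : T) : {set T} :=
  [set y | adj x y].

Definition common_nb (T : finType) (adj : rel T) (x y : T) : {set T} :=
  [set z | adj x z && adj y z].

(* Assumes adj is a simple graph
   relation (symmetric, irreflexive), which holds for Cayley graphs. *)
Definition srg (T : finType) (adj : rel T) (v k : nat) (lam mu : int) : Prop :=
  #|T| = v /\
  (forall x, #|nbhd adj x| = k) /\
  (exists x y, x != y /\ ~~ adj x y) /\
  (exists x y, adj x y) /\
  (forall x y, x != y -> adj x y -> (#|common_nb adj x y|)%:Z = lam) /\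
  (forall x y, x != y -> ~~ adj x y -> (#|common_nb adj x y|)%:Z = mu).

Definition prime_power (q : nat) : Prop :=
  exists p e : nat, prime p /\ (0 < e)%N /\ q = (p ^ e)%N.

(* Take F = GF(q), in which -1 is a nonsquare, the form Q(x) = x_1^2 + ... + x_2m^2
   on G = F^2m, and D = {x | Q(x) is a nonzero square}.  Reflections and nonzero
   scalings preserve D, so the number codeg a of common neighbours of 0 and a
   depends only on whether Q(a) is a nonzero square, a nonsquare, or 0 (a <> 0).
   The plane (F^2, Q) is the norm form of F[i] = GF(q^2); multiplicativity of the
   norm shows that every nonzero value is taken q + 1 times and yields the two
   codegrees in the plane.  Splitting off a plane, G = F^2 + F^2j with j = m - 1,
   expresses the anisotropic codegrees through the plane ones and the number of
   vectors of each norm in F^2j, namely (q^2j - (-q)^j)/q, plus (-q)^j for norm 0;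
   for m odd this gives lambda and mu.  The isotropic codegree then follows from
   the double count  sum_a codeg a = k^2. *)

From mathcomp Require Import all_boot all_order all_algebra all_field.
From mathcomp Require Import ring lra.
Set Implicit Arguments. Unset Strict Implicit. Unset Printing Implicit Defensive.
Import GRing.Theory Num.Theory.
Local Open Scope ring_scope.

(* Counting is done in rat, since the closed forms below divide by q. *)
Definition ind (b : bool) : rat := if b then 1 else 0.
Arguments ind : simpl never.

Lemma ind1 : ind true = 1. Proof. by []. Qed.
Lemma ind0 : ind false = 0. Proof. by []. Qed.

Lemma ind_and a b : ind (a && b) = ind a * ind b.
Proof. by case: a; case: b; rewrite /ind ?mulr1 ?mulr0. Qed.

Lemma card_ind (T : finType) (P : {pred T}) : #|P|%:R = \sum_x ind (x \in P).
Proof.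
by rewrite -sum1_card natr_sum big_mkcond; apply: eq_bigr => x _; case: (x \in P).
Qed.

Lemma sum_ind_eq_mul (T : finType) (a : T) (g : T -> rat) :
  \sum_x ind (x == a) * g x = g a.
Proof.
rewrite (bigD1 a) //= eqxx ind1 mul1r big1 ?addr0 //.
by move=> x /negbTE ->; rewrite ind0 mul0r.
Qed.

Lemma sum_ind_eq (T : finType) (a : T) : \sum_x ind (x == a) = 1.
Proof. by rewrite -(sum_ind_eq_mul a (fun=> 1)); apply: eq_bigr => x _; rewrite mulr1. Qed.

Lemma sum_ind_eq_sym (T : finType) (a : T) : \sum_x ind (a == x) = 1.
Proof. by rewrite -(sum_ind_eq a); apply: eq_bigr => x _; rewrite eq_sym. Qed.

Lemma sum_fibres (T U : finType) (g : T -> U) (f : U -> rat) :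
  \sum_x f (g x) = \sum_c (\sum_x ind (g x == c)) * f c.
Proof.
under [RHS]eq_bigr do rewrite mulr_suml.
rewrite exchange_big; apply: eq_bigr => x _.
by under eq_bigr do rewrite eq_sym; rewrite sum_ind_eq_mul.
Qed.

Lemma sumr_subl (V : finZmodType) (x : V) (f : V -> rat) :
  \sum_u f (x - u) = \sum_u f u.
Proof. by rewrite [RHS](reindex_inj (inj_comp (addrI x) oppr_inj)). Qed.

Lemma sumr_subr (V : finZmodType) (b : V) (f : V -> rat) :
  \sum_u f (u - b) = \sum_u f u.
Proof. by rewrite [RHS](reindex_inj (addIr (- b))). Qed.

Lemma sumr_affine (F : finFieldType) (u v : F) (f : F -> rat) :
  u != 0 -> \sum_c f (v + u * c) = \sum_c f c.
Proof. by move=> u0; rewrite [RHS](reindex_inj (inj_comp (addrI v) (mulfI u0))). Qed.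

Section Squares.
Variable F : finFieldType.
Hypothesis two_neq0 : (2 : F) != 0.
Local Notation q := (#|F|%:R : rat).

Definition is_sq (s : F) : bool := [exists u, u ^+ 2 == s].
Definition nzsq (s : F) : bool := (s != 0) && is_sq s.
Definition nonsq (s : F) : bool := (s != 0) && ~~ is_sq s.
Definition nzsq_count : rat := \sum_s ind (nzsq s).
Local Notation h := nzsq_count.

Lemma is_sqP s : reflect (exists u, u ^+ 2 = s) (is_sq s).
Proof. by apply: (iffP existsP) => [[u /eqP <-]|[u <-]]; exists u. Qed.

Lemma sqrt_neq0 (s u : F) : s != 0 -> u ^+ 2 = s -> u != 0.
Proof. by move=> s0 us; apply: contraNneq s0 => u0; rewrite -us u0 expr0n. Qed.

Lemma count_sqrt s : \sum_x ind (x ^+ 2 == s) = ind (s == 0) + 2 * ind (nzsq s).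
Proof.
have [->|s0] := eqVneq s 0.
  rewrite /nzsq eqxx ind1 ind0 mulr0 addr0 -(sum_ind_eq (0 : F)).
  by apply: eq_bigr => x _; rewrite sqrf_eq0.
rewrite /nzsq s0 ind0 add0r /=.
have [[u us]|no_sqrt] := is_sqP s; last first.
  by rewrite ind0 mulr0 big1 // => x _; case: eqP => // xs; case: no_sqrt; exists x.
have u0 := sqrt_neq0 s0 us.
have u_neqN : u != - u.
  by apply: contra_neq (mulf_neq0 two_neq0 u0) => uu; rewrite mulr_natl mulr2n {1}uu addNr.
rewrite (eq_bigr (fun x => ind (x == u) + ind (x == - u))); last first.
  move=> x _; rewrite -us eqf_sqr /ind.
  by have [->|] := eqVneq x u; rewrite ?(negbTE u_neqN) //; case: (x == - u).
by rewrite big_split /= !sum_ind_eq ind1 mulr1.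
Qed.

Lemma card_nzsq : q = 1 + 2 * h.
Proof.
have -> : q = \sum_(s : F) \sum_(x : F) ind (x ^+ 2 == s).
  by rewrite exchange_big -sum1_card natr_sum; apply: eq_bigr => x _; rewrite sum_ind_eq_sym.
by under eq_bigr do rewrite count_sqrt; rewrite big_split /= sum_ind_eq -mulr_sumr.
Qed.

Lemma count_nonsq : \sum_s ind (nonsq s) = h.
Proof.
have : \sum_(s : F) (ind (s == 0) + ind (nzsq s) + ind (nonsq s)) = q.
  rewrite -sum1_card natr_sum; apply: eq_bigr => s _.
  by rewrite /nzsq /nonsq /ind; case: (s == 0); case: (is_sq s).
rewrite !big_split /= sum_ind_eq card_nzsq => e.
by apply: (addrI (1 + h)); rewrite e; ring.
Qed.

Lemma nzsq_count_half : h = (#|F|./2)%:R.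
Proof.
have hE : h = #|[set s | nzsq s]|%:R by rewrite card_ind; under [RHS]eq_bigr do rewrite inE.
have : #|F| = (#|[set s | nzsq s]|.*2 + 1)%N.
  by apply/eqP; rewrite -(eqr_nat rat) card_nzsq hE natrD -muln2 natrM mulrC addrC.
by rewrite hE => ->; rewrite addn1 /= uphalf_double.
Qed.

Lemma nzsq_count_gt0 : 0 < h.
Proof. by have := card_finNzRing_gt1 F; rewrite -(ltr_nat rat) card_nzsq; lra. Qed.

Lemma nzsq_mul_nonsq a b : nzsq a -> nonsq b -> nonsq (a * b).
Proof.
move=> /andP[a0 /is_sqP[u ua]] /andP[b0 nb]; rewrite /nonsq mulf_neq0 //=.
apply: contra nb => /is_sqP[w wab]; apply/is_sqP; exists (w / u).
by rewrite expr_div_n wab -ua mulrC mulKf // expf_neq0 // (sqrt_neq0 a0 ua).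
Qed.

Lemma nonsq_mul a b : nonsq a -> nonsq b -> is_sq (a * b).
Proof.
move=> na nb; have a0 : a != 0 by case/andP: na.
pose S := [set s | nzsq s]; pose N := [set s | nonsq s].
have card_SN : #|S| = #|N|.
  apply/eqP; rewrite -(eqr_nat rat) !card_ind.
  under eq_bigr do rewrite inE; under [X in _ == X]eq_bigr do rewrite inE.
  by rewrite count_nonsq.
have aS_N : [set a * s | s in S] = N.
  apply/eqP; rewrite eqEcard (card_imset _ (mulfI a0)) card_SN leqnn andbT.
  by apply/subsetP => x /imsetP[s]; rewrite !inE => Ss ->; rewrite mulrC nzsq_mul_nonsq.
have : b \in [set a * s | s in S] by rewrite aS_N inE.
case/imsetP => s; rewrite inE => /andP[_ /is_sqP[v <-]] ->.
by apply/is_sqP; exists (a * v); rewrite mulrA -expr2 exprMn.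
Qed.

Lemma nzsq_mul_by_nonsq nu y : nonsq nu -> nzsq (nu * y) = nonsq y.
Proof.
move=> nnu; have nu0 : nu != 0 by case/andP: nnu.
have [->|y0] := eqVneq y 0; first by rewrite mulr0 /nzsq /nonsq eqxx.
rewrite /nzsq /nonsq mulf_neq0 // y0 /=.
case sy : (is_sq y) => /=.
  have ny : nzsq y by rewrite /nzsq y0 sy.
  by apply/negbTE; have /andP[_] := nzsq_mul_nonsq ny nnu; rewrite mulrC.
by apply: nonsq_mul nnu _; rewrite /nonsq y0 sy.
Qed.

Lemma exists_nonsq : exists nu, nonsq nu.
Proof.
apply/existsP; apply: contraTT nzsq_count_gt0; rewrite negb_exists => /forallP nn.
by rewrite -count_nonsq big1 ?ltxx // => s _; rewrite (negbTE (nn s)).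
Qed.

Lemma sum_two_sq (c : F) : exists u v, u ^+ 2 + v ^+ 2 = c.
Proof.
pose SQ := [set s | is_sq s].
have card_SQ : (2 * #|SQ| = #|F| + 1)%N.
  have sq0 : is_sq 0 by apply/is_sqP; exists 0; rewrite expr0n.
  apply/eqP; rewrite -(eqr_nat rat) natrM natrD card_ind card_nzsq.
  rewrite (eq_bigr (fun x => ind (x == 0) + ind (nzsq x))); last first.
    by move=> x _; rewrite inE /nzsq /ind; case: eqP => [->|_]; rewrite ?sq0 //=; case: (is_sq x).
  by rewrite big_split /= sum_ind_eq -/h; apply/eqP; ring.
pose B := [set c - s | s in SQ].
have : (0 < #|SQ :&: B|)%N.
  have := max_card (mem (SQ :|: B)); rewrite cardsU card_imset; last exact: subrI.
  case: (posnP #|SQ :&: B|) => // ->; rewrite subn0 addnn -mul2n card_SQ.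
  by rewrite addn1 ltnn.
case/card_gt0P => t; rewrite !inE => /andP[/is_sqP[u ut] /imsetP[s]].
rewrite inE => /is_sqP[v vs] tcs.
by exists u, v; rewrite ut tcs vs subrK.
Qed.

End Squares.

Section QuadraticForm.
Variables (F : finFieldType) (n : nat).
Hypothesis two_neq0 : (2 : F) != 0.
Implicit Types x y z a b v w : 'rV[F]_n.

Definition dot x y : F := \sum_i x 0 i * y 0 i.
Definition qform x : F := dot x x.

Lemma dotC x y : dot x y = dot y x.
Proof. by apply: eq_bigr => i _; rewrite mulrC. Qed.

Lemma dotDl x y z : dot (x + y) z = dot x z + dot y z.
Proof. by rewrite /dot -big_split; apply: eq_bigr => i _; rewrite mxE mulrDl. Qed.

Lemma dotNl x z : dot (- x) z = - dot x z.
Proof. by rewrite /dot -sumrN; apply: eq_bigr => i _; rewrite mxE mulNr. Qed.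

Lemma dotZl t x z : dot (t *: x) z = t * dot x z.
Proof. by rewrite /dot mulr_sumr; apply: eq_bigr => i _; rewrite mxE mulrA. Qed.

Lemma dotBl x y z : dot (x - y) z = dot x z - dot y z.
Proof. by rewrite dotDl dotNl. Qed.

Lemma dotDr x y z : dot z (x + y) = dot z x + dot z y.
Proof. by rewrite dotC dotDl !(dotC z). Qed.

Lemma dotBr x y z : dot z (x - y) = dot z x - dot z y.
Proof. by rewrite dotC dotBl !(dotC z). Qed.

Lemma dotZr t x z : dot z (t *: x) = t * dot z x.
Proof. by rewrite dotC dotZl dotC. Qed.

Lemma qformD x y : qform (x + y) = qform x + 2 * dot x y + qform y.
Proof. by rewrite /qform dotDl !dotDr (dotC y x); ring. Qed.

Lemma qformB x y : qform (x - y) = qform x - 2 * dot x y + qform y.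
Proof. by rewrite /qform dotBl !dotBr (dotC y x); ring. Qed.

Lemma qformZ t x : qform (t *: x) = t ^+ 2 * qform x.
Proof. by rewrite /qform dotZl dotZr mulrA -expr2. Qed.

Lemma qformN x : qform (- x) = qform x.
Proof. by rewrite -scaleN1r qformZ sqrrN expr1n mul1r. Qed.

Lemma qform0 : qform 0 = 0.
Proof. by rewrite -(scale0r 0) qformZ expr0n mul0r. Qed.

Definition Dset : {set 'rV[F]_n} := [set x | nzsq (qform x)].
Lemma DsetN x : (- x \in Dset) = (x \in Dset).
Proof. by rewrite !inE qformN. Qed.

Definition codeg a : rat := \sum_x ind ((x \in Dset) && (x - a \in Dset)).

Lemma codeg_map (f g : 'rV[F]_n -> 'rV[F]_n) a :
  cancel f g -> cancel g f -> {morph f : x y / x - y} ->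
  {mono f : x / x \in Dset} -> codeg (f a) = codeg a.
Proof.
move=> fK gK fB fD; rewrite /codeg (reindex_inj (can_inj fK)) /=.
by apply: eq_bigr => x _; rewrite -fB !fD.
Qed.

Lemma codegZ t a : t != 0 -> codeg (t *: a) = codeg a.
Proof.
move=> t0; apply: (@codeg_map _ (fun x => t^-1 *: x)).
- by move=> x; rewrite scalerA mulVf ?scale1r.
- by move=> x; rewrite scalerA mulfV ?scale1r.
- by move=> x y; rewrite scalerBr.
move=> x; rewrite !inE qformZ /nzsq mulf_eq0 expf_eq0 (negbTE t0) /=.
case: (qform x == 0) => //=; apply/idP/idP => /is_sqP[u hu]; apply/is_sqP.
  by exists (u / t); rewrite expr_div_n hu mulrC mulKf // expf_neq0.
by exists (t * u); rewrite exprMn hu.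
Qed.

Definition reflection v x := x - (2 * dot x v / qform v) *: v.

Lemma reflectionK v : qform v != 0 -> involutive (reflection v).
Proof.
move=> v0 x; rewrite /reflection dotBl dotZl -/(qform v).
have -> : 2 * (dot x v - 2 * dot x v / qform v * qform v) / qform v =
          - (2 * dot x v / qform v) by field.
by rewrite scaleNr opprK subrK.
Qed.

Lemma qform_reflection v x : qform v != 0 -> qform (reflection v x) = qform x.
Proof. by move=> v0; rewrite /reflection qformB qformZ dotZr -/(qform v); field. Qed.

Lemma codeg_reflection v a : qform v != 0 -> codeg (reflection v a) = codeg a.
Proof.
move=> v0; apply: (@codeg_map _ (reflection v)); try exact: reflectionK.
  move=> x y; rewrite /reflection dotBl mulrBr mulrBl scalerBl.
  by rewrite !opprB addrACA [RHS]addrACA [- y + _]addrC.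
by move=> x; rewrite !inE qform_reflection.
Qed.

Lemma codeg_eq_qform a b :
  qform a = qform b -> qform (a - b) != 0 -> codeg a = codeg b.
Proof.
move=> eab ab0.
have e : qform (a - b) = 2 * dot a (a - b) by rewrite qformB dotBr -/(qform a) -eab; ring.
suff <- : reflection (a - b) a = b by rewrite codeg_reflection.
by rewrite /reflection -e divff // scale1r opprB addrC subrK.
Qed.

Lemma codegN a : codeg (- a) = codeg a.
Proof. by rewrite -scaleN1r codegZ // oppr_eq0 oner_eq0. Qed.

Lemma codeg_same_qform a b : qform a = qform b -> qform a != 0 -> codeg a = codeg b.
Proof.
move=> eab a0; have [ab0|] := eqVneq (qform (a - b)) 0; last exact: codeg_eq_qform.
(* a - b and a + b cannot both be isotropic, so reflect a onto -b instead *)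
rewrite -codegN; apply: codeg_eq_qform; first by rewrite qformN.
have : qform (a + b) = 2 * 2 * qform a.
  by rewrite -[qform (a + b)]addr0 -ab0 qformD qformB -eab; ring.
by rewrite -opprD qformN => ->; rewrite !mulf_neq0.
Qed.

Lemma codeg_sqclass a b t :
  t != 0 -> qform b = t ^+ 2 * qform a -> qform a != 0 -> codeg b = codeg a.
Proof.
move=> t0 eb a0; rewrite -(codegZ a t0); apply: codeg_same_qform; first by rewrite qformZ.
by rewrite eb mulf_neq0 // expf_neq0.
Qed.

Lemma dot_delta a i : dot a (delta_mx 0 i) = a 0 i.
Proof.
rewrite /dot (bigD1 i) //= big1 ?addr0; first by rewrite mxE !eqxx mulr1.
by move=> j /negbTE ji; rewrite mxE ji andbF mulr0.
Qed.

Lemma rowV_neq0P a : reflect (exists i, a 0 i != 0) (a != 0).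
Proof.
apply: (iffP idP) => [a0|[i]]; last by apply: contra_neq => ->; rewrite mxE.
apply/existsP; apply: contraR a0; rewrite negb_exists => /forallP a0.
by apply/eqP/rowP => i; rewrite mxE; apply/eqP; rewrite -[_ == _]negbK a0.
Qed.

Lemma exists_dot_neq0 a b : a != 0 -> b != 0 -> exists w, (dot a w != 0) && (dot b w != 0).
Proof.
move=> /rowV_neq0P[i ai] /rowV_neq0P[j bj].
have [bi|bi] := eqVneq (b 0 i) 0; last by exists (delta_mx 0 i); rewrite !dot_delta ai bi.
have [aj|aj] := eqVneq (a 0 j) 0; last by exists (delta_mx 0 j); rewrite !dot_delta aj bj.
by exists (delta_mx 0 i + delta_mx 0 j); rewrite !dotDr !dot_delta aj bi addr0 add0r ai bj.
Qed.

Lemma codeg_isotropic_dot a b :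
  qform a = 0 -> qform b = 0 -> dot a b != 0 -> codeg a = codeg b.
Proof.
move=> a0 b0 ab; apply: codeg_eq_qform; first by rewrite a0 b0.
by rewrite qformB a0 b0 sub0r addr0 oppr_eq0 mulf_neq0.
Qed.

Lemma codeg_isotropic a b :
  a != 0 -> b != 0 -> qform a = 0 -> qform b = 0 -> codeg a = codeg b.
Proof.
move=> an0 bn0 a0 b0; have [ab|] := eqVneq (dot a b) 0; last exact: codeg_isotropic_dot.
(* pass through an isotropic c = w + t a that is non-orthogonal to both a and b *)
have [w /andP[aw bw]] := exists_dot_neq0 an0 bn0.
pose c := w + (- qform w / (2 * dot a w)) *: a.
have ac : dot a c = dot a w by rewrite /c dotDr dotZr -/(qform a) a0 mulr0 addr0.
have bc : dot b c = dot b w by rewrite /c dotDr dotZr (dotC b a) ab mulr0 addr0.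
have c0 : qform c = 0.
  by rewrite /c qformD qformZ a0 mulr0 addr0 dotZr (dotC w a); field; rewrite aw two_neq0.
rewrite (codeg_isotropic_dot a0 c0) ?ac //.
by apply: codeg_isotropic_dot; rewrite // dotC bc.
Qed.

End QuadraticForm.

Section NormCount.
Variable F : finFieldType.
Local Notation q := (#|F|%:R : rat).

Lemma cardF_neq0 : q != 0.
Proof. by rewrite pnatr_eq0 -lt0n; apply/card_gt0P; exists 0. Qed.

Lemma sum_row_mx n1 n2 (f : 'rV[F]_(n1 + n2) -> rat) :
  \sum_x f x = \sum_u \sum_v f (row_mx u v).
Proof.
rewrite pair_bigA; apply: (reindex (fun p : 'rV_n1 * 'rV_n2 => row_mx p.1 p.2)).
exists (fun x => (lsubmx x, rsubmx x)) => [[u v] _|x _] /=.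
  by rewrite row_mxKl row_mxKr.
by rewrite hsubmxK.
Qed.

Lemma dot_row_mx n1 n2 (u u' : 'rV[F]_n1) (v v' : 'rV[F]_n2) :
  dot (row_mx u v) (row_mx u' v') = dot u u' + dot v v'.
Proof.
rewrite /dot big_split_ord; congr (_ + _); apply: eq_bigr => i _.
  by rewrite !row_mxEl.
by rewrite !row_mxEr.
Qed.

Lemma qform_row_mx n1 n2 (u : 'rV[F]_n1) (v : 'rV[F]_n2) :
  qform (row_mx u v) = qform u + qform v.
Proof. exact: dot_row_mx. Qed.

Lemma sum1_rV n : \sum_(x : 'rV[F]_n) (1 : rat) = q ^+ n.
Proof. by rewrite sumr_const card_mx mul1n natrX. Qed.

Definition nvec n (c : F) : rat := \sum_(x : 'rV[F]_n) ind (qform x == c).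

Lemma sum_nvec n : \sum_c nvec n c = q ^+ n.
Proof.
by rewrite exchange_big -sum1_rV; apply: eq_bigr => x _; apply: sum_ind_eq_sym.
Qed.

Lemma nvec0 c : nvec 0 c = ind (c == 0).
Proof.
rewrite /nvec (eq_bigr (fun=> ind (c == 0))) => [|x _]; last by rewrite thinmx0 qform0 eq_sym.
by rewrite sumr_const card_mx /ind; case: (c == 0).
Qed.

Lemma sum_qform n A B (f : F -> rat) :
  (forall c, nvec n c = A + B * ind (c == 0)) ->
  \sum_(x : 'rV[F]_n) f (qform x) = A * \sum_c f c + B * f 0.
Proof.
move=> nvecE; rewrite (sum_fibres (@qform F n)).
rewrite (eq_bigr (fun c => A * f c + B * (ind (c == 0) * f c))) => [|c _].
  by rewrite big_split -!mulr_sumr sum_ind_eq_mul.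
by rewrite -/(nvec n c) nvecE; ring.
Qed.

Lemma sum_dotl n (a : 'rV[F]_n) (f : F -> rat) :
  a != 0 -> \sum_z f (dot z a) = q ^+ n / q * \sum_c f c.
Proof.
case/rowV_neq0P => i ai; pose fibre c := \sum_(z : 'rV[F]_n) ind (dot z a == c).
have fibreE c : fibre c = fibre 0.
  rewrite /fibre (reindex_inj (addIr ((c / a 0 i) *: delta_mx 0 i))); apply: eq_bigr => z _.
  rewrite dotDl dotZl (dotC (delta_mx 0 i)) dot_delta mulfVK //.
  by rewrite -[X in _ == X]add0r (inj_eq (addIr c)).
have fibre0 : fibre 0 = q ^+ n / q.
  have : \sum_c fibre c = q ^+ n.
    by rewrite exchange_big -sum1_rV; apply: eq_bigr => z _; apply: sum_ind_eq_sym.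
  under eq_bigr do rewrite fibreE.
  by rewrite sumr_const -[_ *+ _]mulr_natr => <-; rewrite mulfK ?cardF_neq0.
rewrite (sum_fibres (fun z => dot z a)) mulr_sumr; apply: eq_bigr => c _.
by rewrite -/(fibre c) fibreE fibre0.
Qed.

End NormCount.

Section Plane.
Variable F : finFieldType.
Hypothesis two_neq0 : (2 : F) != 0.
Hypothesis nonsq_m1 : ~~ is_sq (-1 : F).
Local Notation q := (#|F|%:R : rat).
Implicit Types w x y z : 'rV[F]_2.

Definition vec2 (a b : F) : 'rV[F]_2 := \row_i (if i == ord0 then a else b).

Lemma vec2E0 a b : vec2 a b 0 ord0 = a. Proof. by rewrite mxE. Qed.
Lemma vec2E1 a b : vec2 a b 0 ord_max = b. Proof. by rewrite mxE. Qed.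

Lemma vec2_eta z : z = vec2 (z 0 ord0) (z 0 ord_max).
Proof.
apply/rowP => i; rewrite mxE; case: ifP => [/eqP-> //|].
by case: i => [[|[|k]] //= i2] _; congr (z 0 _); apply: val_inj.
Qed.

Lemma qform_vec2 a b : qform (vec2 a b) = a ^+ 2 + b ^+ 2.
Proof. by rewrite /qform /dot big_ord_recl big_ord1 !mxE /= !expr2. Qed.

Lemma qform2_eq0 z : (qform z == 0) = (z == 0).
Proof.
apply/idP/idP => [|/eqP->]; last by rewrite qform0.
rewrite [z]vec2_eta qform_vec2; set a := z 0 ord0; set b := z 0 ord_max => /eqP ab0.
have b0 : b = 0.
  apply/eqP; apply: contraNT nonsq_m1 => b0; apply/is_sqP; exists (a / b).
  rewrite expr_div_n; apply: (mulIf (expf_neq0 2 b0)); rewrite mulfVK ?expf_neq0 //.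
  by rewrite mulN1r; apply/eqP; rewrite -addr_eq0 ab0.
move: ab0; rewrite b0 expr0n addr0 => /eqP; rewrite sqrf_eq0 => /eqP a0.
by apply/eqP/rowP => i; rewrite !mxE a0; case: ifP.
Qed.

(* the multiplication of F[i] = F[X]/(X^2 + 1), a field because -1 is a nonsquare *)
Definition cmul w z : 'rV[F]_2 :=
  vec2 (w 0 ord0 * z 0 ord0 - w 0 ord_max * z 0 ord_max)
       (w 0 ord_max * z 0 ord0 + w 0 ord0 * z 0 ord_max).

Lemma qform_cmul w z : qform (cmul w z) = qform w * qform z.
Proof. by rewrite qform_vec2 [w]vec2_eta [z]vec2_eta !qform_vec2 !vec2E0 !vec2E1; ring. Qed.

Lemma cmulBr w x y : cmul w (x - y) = cmul w x - cmul w y.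
Proof. by apply/rowP => i; rewrite !mxE; case: ifP => _; ring. Qed.

Definition e1 : 'rV[F]_2 := vec2 1 0.

Lemma qform_e1 : qform e1 = 1.
Proof. by rewrite qform_vec2 expr1n expr0n addr0. Qed.

Lemma e1_neq0 : e1 != 0.
Proof. by rewrite -qform2_eq0 qform_e1 oner_eq0. Qed.

Lemma cmulr1 w : cmul w e1 = w.
Proof. by rewrite /cmul !vec2E0 !vec2E1 !mulr1 !mulr0 subr0 addr0 -vec2_eta. Qed.

Lemma cmul_inj w : qform w != 0 -> injective (cmul w).
Proof.
move=> w0 x y /eqP; rewrite -subr_eq0 -cmulBr -qform2_eq0 qform_cmul mulf_eq0.
by rewrite (negbTE w0) qform2_eq0 subr_eq0 => /eqP.
Qed.

Lemma qform2_surj c : exists w, qform w = c.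
Proof. by have [u [v uv]] := sum_two_sq two_neq0 c; exists (vec2 u v); rewrite qform_vec2. Qed.

Lemma nvec2_0 : nvec 2 (0 : F) = 1.
Proof. by rewrite -(sum_ind_eq (0 : 'rV[F]_2)); apply: eq_bigr => x _; rewrite qform2_eq0. Qed.

Lemma nvec2_const (c : F) : c != 0 -> nvec 2 c = nvec 2 (1 : F).
Proof.
move=> c0; have [w wc] := qform2_surj c.
have w0 : qform w != 0 by rewrite wc.
rewrite /nvec (reindex_inj (cmul_inj w0)); apply: eq_bigr => x _.
by rewrite qform_cmul wc -[X in _ == X](mulr1 c) (inj_eq (mulfI c0)).
Qed.

Lemma nvec2 (c : F) : nvec 2 c = (q + 1) + - q * ind (c == 0).
Proof.
have [->|c0] := eqVneq c 0; first by rewrite nvec2_0 ind1; ring.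
rewrite nvec2_const // ind0 mulr0 addr0.
have := sum_nvec F 2; rewrite (bigD1 0) //= nvec2_0.
rewrite (eq_bigr (fun=> nvec 2 (1 : F))) => [|d]; last exact: nvec2_const.
rewrite sumr_const cardC1 -[_ *+ _]mulr_natr -subn1 natrB ?(ltnW (card_finNzRing_gt1 F)) // => e.
have q1 : q - 1 != 0 by rewrite subr_eq0 pnatr_eq1 gtn_eqF // card_finNzRing_gt1.
by apply: (mulIf q1); apply: (addrI 1); rewrite e; ring.
Qed.

End Plane.

Section NormRecursion.
Variable F : finFieldType.
Hypothesis two_neq0 : (2 : F) != 0.
Hypothesis nonsq_m1 : ~~ is_sq (-1 : F).
Local Notation q := (#|F|%:R : rat).
Local Notation h := (nzsq_count F).

Lemma nvec_rec k (c : F) : nvec (2 + k) c = (q + 1) * q ^+ k - q * nvec k c.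
Proof.
rewrite /nvec sum_row_mx -/nvec.
rewrite (eq_bigr (fun z => nvec k (c - qform z))) => [|z _]; last first.
  by apply: eq_bigr => y _; rewrite qform_row_mx addrC eq_sym -subr_eq eq_sym.
rewrite (sum_qform (fun d => nvec k (c - d)) (nvec2 two_neq0 nonsq_m1)).
by rewrite sumr_subl sum_nvec subr0 mulNr.
Qed.

Lemma nvec_double j (c : F) :
  nvec (j.*2) c = (q ^+ (j.*2) - (- q) ^+ j) / q + (- q) ^+ j * ind (c == 0).
Proof.
have q0 := cardF_neq0 F.
elim: j c => [|j IHj] c; first by rewrite nvec0 subrr mul0r add0r mul1r.
rewrite doubleS -addn2 addnC nvec_rec IHj !exprS; field; exact: q0.
Qed.

Lemma codeg_row_mx m k (a : 'rV[F]_m) A B : a != 0 ->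
  (forall c : F, nvec k c = A + B * ind (c == 0)) ->
  codeg (row_mx a (0 : 'rV[F]_k)) = A * (q ^+ m / q) * h ^+ 2 + B * codeg a.
Proof.
move=> a0 nvecE.
pose Phi e := \sum_(z : 'rV[F]_m) ind (nzsq (qform z + e) && nzsq (qform (z - a) + e)).
have -> : codeg (row_mx a (0 : 'rV[F]_k)) = \sum_(y : 'rV[F]_k) Phi (qform y).
  rewrite /codeg sum_row_mx exchange_big; apply: eq_bigr => y _; apply: eq_bigr => z _.
  by rewrite opp_row_mx add_row_mx oppr0 addr0 !inE !qform_row_mx.
have Phi0 : Phi 0 = codeg a by apply: eq_bigr => z _; rewrite !inE !addr0.
(* substitute s = qform z + e; then qform (z - a) + e = s + qform a - 2 dot z a *)
have sum_Phi : \sum_e Phi e = q ^+ m / q * h ^+ 2.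
  rewrite exchange_big (eq_bigr (fun z => \sum_s
      ind (nzsq s) * ind (nzsq (s + qform a + (-2) * dot z a)))) => [|z _]; last first.
    rewrite (reindex_inj (addrI (- qform z))); apply: eq_bigr => s _.
    by rewrite ind_and addNKr qformB; congr (_ * ind (nzsq _)); ring.
  rewrite exchange_big (eq_bigr (fun s => ind (nzsq s) * (q ^+ m / q * h))) => [|s _].
    by rewrite -mulr_suml -/h; ring.
  rewrite -mulr_sumr (sum_dotl (fun c => ind (nzsq (s + qform a + (-2) * c)))) //.
  by rewrite (@sumr_affine _ _ _ (fun d => ind (nzsq d))) // oppr_eq0.
by rewrite (sum_qform Phi nvecE) Phi0 sum_Phi mulrA.
Qed.

End NormRecursion.

Section CodegreeSum.
Variables (F : finFieldType) (n : nat).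
Hypothesis two_neq0 : (2 : F) != 0.
Local Notation D := (Dset F n).

Lemma cayley_set_Dset : cayley_set D.
Proof.
split; first by rewrite inE qform0 /nzsq eqxx.
by apply/setP => x; rewrite -[x in LHS]opprK mem_imset ?DsetN //; apply: oppr_inj.
Qed.

Definition valency : rat := \sum_(x : 'rV[F]_n) ind (x \in D).
Definition nonsq_norms : rat := \sum_(x : 'rV[F]_n) ind (nonsq (qform x)).

Lemma sum_codeg : \sum_(a : 'rV[F]_n) codeg a = valency ^+ 2.
Proof.
rewrite exchange_big expr2 mulr_suml; apply: eq_bigr => x _.
under eq_bigr do rewrite ind_and.
by rewrite -mulr_sumr (sumr_subl x (fun a => ind (a \in D))) mulrC.
Qed.

Lemma codeg0 : codeg (0 : 'rV[F]_n) = valency.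
Proof. by apply: eq_bigr => x _; rewrite subr0 andbb. Qed.

Lemma codeg_Dset (e a : 'rV[F]_n) : qform e = 1 -> a \in D -> codeg a = codeg e.
Proof.
move=> e1; rewrite inE => /andP[a0 /is_sqP[u ua]].
apply: (codeg_sqclass two_neq0 (t := u)); rewrite ?e1 ?mulr1 ?oner_eq0 //.
exact: sqrt_neq0 a0 ua.
Qed.

Lemma codeg_nonsq (b a : 'rV[F]_n) :
  nonsq (qform b) -> nonsq (qform a) -> codeg a = codeg b.
Proof.
move=> nb na; have /is_sqP[w hw] := nonsq_mul two_neq0 na nb.
have [b0 a0] : qform b != 0 /\ qform a != 0 by case/andP: nb; case/andP: na.
apply: (codeg_sqclass two_neq0 (t := w / qform b)) => //.
  by rewrite mulf_neq0 ?invr_eq0 // (sqrt_neq0 (mulf_neq0 a0 b0) hw).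
by rewrite expr_div_n hw; field.
Qed.

Lemma sum_codeg_classes (e b : 'rV[F]_n) : qform e = 1 -> nonsq (qform b) ->
  valency ^+ 2 = valency + valency * codeg e + nonsq_norms * codeg b +
    \sum_(a : 'rV[F]_n) ind ((a != 0) && (qform a == 0)) * codeg a.
Proof.
move=> e1 nb; rewrite -sum_codeg.
rewrite (eq_bigr (fun a => ind (a == 0) * codeg a + ind (a \in D) * codeg e
   + ind (nonsq (qform a)) * codeg b + ind ((a != 0) && (qform a == 0)) * codeg a)).
  by rewrite !big_split /= sum_ind_eq_mul codeg0 -!mulr_suml.
move=> a _; have [->|a0] := eqVneq a 0.
  by rewrite ind1 inE /nzsq /nonsq qform0 eqxx /= ind0; ring.
rewrite ind0 /=; have [qa|qa] := eqVneq (qform a) 0.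
  by rewrite inE /nzsq /nonsq qa eqxx /= ind0 ind1; ring.
have [aD|aD] := boolP (a \in D).
  have : ~~ nonsq (qform a) by move: aD; rewrite inE /nzsq /nonsq => /andP[_ ->]; rewrite andbF.
  by move/negbTE->; rewrite ind0 ind1 (codeg_Dset e1 aD); ring.
have na : nonsq (qform a) by move: aD; rewrite inE /nzsq /nonsq qa.
by rewrite na ind0 ind1 (codeg_nonsq nb na); ring.
Qed.

Lemma card_common_nb (x y : 'rV[F]_n) :
  #|common_nb (cay_adj D) x y|%:R = codeg (x - y).
Proof.
rewrite card_ind /codeg -(sumr_subl x (fun u => ind ((u \in D) && (u - (x - y) \in D)))).
apply: eq_bigr => z _; rewrite inE /cay_adj.
by have -> : x - z - (x - y) = y - z by rewrite opprB addrC addrA addrNK.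
Qed.

Lemma card_nbhd (x : 'rV[F]_n) : #|nbhd (cay_adj D) x|%:R = valency.
Proof.
rewrite card_ind /valency -(sumr_subl x (fun u => ind (u \in D))).
by apply: eq_bigr => z _; rewrite inE.
Qed.

End CodegreeSum.

Section PlaneCodegree.
Variable F : finFieldType.
Hypothesis two_neq0 : (2 : F) != 0.
Hypothesis nonsq_m1 : ~~ is_sq (-1 : F).
Local Notation q := (#|F|%:R : rat).
Local Notation h := (nzsq_count F).
Local Notation D := (Dset F 2).

Lemma sum_plane (f : F -> rat) :
  \sum_(z : 'rV[F]_2) f (qform z) = (q + 1) * \sum_c f c - q * f 0.
Proof. by rewrite (sum_qform f (nvec2 two_neq0 nonsq_m1)) mulNr. Qed.

Lemma valency2 : valency F 2 = h * (q + 1).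
Proof.
rewrite /valency (eq_bigr (fun z => ind (nzsq (qform z)))) => [|z _]; last by rewrite inE.
by rewrite (sum_plane (fun c => ind (nzsq c))) /nzsq eqxx ind0 mulr0 subr0 mulrC.
Qed.

Lemma nonsq_norms2 : nonsq_norms F 2 = h * (q + 1).
Proof.
rewrite /nonsq_norms (sum_plane (fun c => ind (nonsq c))).
by rewrite /nonsq eqxx ind0 mulr0 subr0 count_nonsq // mulrC.
Qed.

Lemma ind_nonsq_plane (z : 'rV[F]_2) :
  ind (nonsq (qform z)) = 1 - (ind (z \in D) + ind (z == 0)).
Proof.
rewrite inE -qform2_eq0 // /nonsq /nzsq.
by case: (qform z == 0); case: (is_sq (qform z)); rewrite /= ?ind0 ?ind1; ring.
Qed.

Lemma e1_Dset : e1 F \in D.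
Proof. by rewrite inE qform_e1 /nzsq oner_eq0; apply/is_sqP; exists 1; rewrite expr1n. Qed.

(* multiplication by b swaps D and the vectors of nonsquare norm *)
Lemma codeg2_nonsq (b : 'rV[F]_2) : nonsq (qform b) -> codeg b = 1 + codeg (e1 F).
Proof.
move=> nb; have b0 : qform b != 0 by case/andP: nb.
have -> : codeg b = \sum_(u : 'rV[F]_2) ind (nonsq (qform u)) * ind (nonsq (qform (u - e1 F))).
  rewrite /codeg (reindex_inj (cmul_inj nonsq_m1 b0)); apply: eq_bigr => u _.
  by rewrite -{3}(cmulr1 b) -cmulBr !inE !qform_cmul !(nzsq_mul_by_nonsq two_neq0 _ nb) ind_and.
have e1D : e1 F \in D := e1_Dset.
have Ne1D : 0 - e1 F \in D by rewrite sub0r DsetN.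
rewrite (eq_bigr (fun u => 1 - (ind (u \in D) + ind (u == 0))
     - (ind (u - e1 F \in D) + ind (u - e1 F == 0))
     + (ind ((u \in D) && (u - e1 F \in D)) + ind (u == e1 F) * ind (u \in D)
        + ind (u == 0) * ind (u - e1 F \in D) + ind (u == 0) * ind (u == e1 F)))) => [|u _].
  rewrite !big_split /= !sumrN !big_split /= sum_ind_eq !sum_ind_eq_mul e1D Ne1D.
  rewrite eq_sym (negbTE (e1_neq0 nonsq_m1)) ind1 ind0.
  rewrite (sumr_subr (e1 F) (fun u => ind (u \in D))) (sumr_subr (e1 F) (fun u => ind (u == 0))).
  by rewrite sum_ind_eq -/(codeg (e1 F)) -/(valency F 2) valency2 sum1_rV card_nzsq //; ring.
by rewrite !ind_nonsq_plane ind_and subr_eq0; ring.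
Qed.

Lemma codeg2_values (b : 'rV[F]_2) : nonsq (qform b) ->
  codeg (e1 F) = h ^+ 2 + h - 1 /\ codeg b = h ^+ 2 + h.
Proof.
move=> nb; have codeg_b := codeg2_nonsq nb.
have := sum_codeg_classes two_neq0 (qform_e1 F) nb.
rewrite big1 => [|a _]; last by rewrite -qform2_eq0 // andNb ind0 mul0r.
rewrite addr0 nonsq_norms2 valency2 => classes; rewrite codeg_b in classes *.
set W := codeg (e1 F) in classes *.
have k0 : h * (q + 1) != 0.
  have := nzsq_count_gt0 two_neq0; rewrite card_nzsq // => h0.
  by rewrite mulf_neq0 ?lt0r_neq0 //; lra.
have : h * (q + 1) * (2 * W - 2 * (h ^+ 2 + h - 1)) =
       - ((h * (q + 1)) ^+ 2 - (h * (q + 1) + h * (q + 1) * W + h * (q + 1) * (1 + W))).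
  by rewrite card_nzsq //; ring.
rewrite {1}classes subrr oppr0 => /eqP; rewrite mulf_eq0 (negbTE k0) subr_eq0 => /eqP.
by move/(mulfI (_ : 2 != 0)) => ->; split; ring.
Qed.

Lemma exists_nonsq_plane : exists b : 'rV[F]_2, nonsq (qform b).
Proof.
have [nu nnu] := exists_nonsq two_neq0.
by have [b bnu] := qform2_surj two_neq0 nu; exists b; rewrite bnu.
Qed.

End PlaneCodegree.

Lemma intr_nat (k : nat) : (k%:Z)%:~R = k%:R :> rat.
Proof. by rewrite pmulrn. Qed.

Section SquareNormGraph.
Variable F : finFieldType.
Hypothesis two_neq0 : (2 : F) != 0.
Hypothesis nonsq_m1 : ~~ is_sq (-1 : F).
Variable j : nat.
Hypothesis j_even : ~~ odd j.
Local Notation q := (#|F|%:R : rat).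
Local Notation h := (nzsq_count F).
Local Notation X := (q ^+ j).
Local Notation n := (2 + j.*2)%N.
Local Notation D := (Dset F n).
Local Notation lambda := (X ^+ 2 * h ^+ 2 + X * (h - 1)).
Local Notation mu := (X ^+ 2 * h ^+ 2 + X * h).

Lemma nvec_2j (c : F) : nvec (j.*2) c = (X ^+ 2 - X) / q + X * ind (c == 0).
Proof.
have mqj : (- q) ^+ j = X by rewrite exprNn -signr_odd (negbTE j_even) mul1r.
by rewrite nvec_double // mqj -muln2 exprM.
Qed.

Lemma nvec_n (c : F) : nvec n c = (q * X ^+ 2 + X) + - (q * X) * ind (c == 0).
Proof.
have q0 := cardF_neq0 F.
by rewrite nvec_rec // nvec_2j -muln2 exprM; field.
Qed.

Lemma valency_n : valency F n = h * (q * X ^+ 2 + X).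
Proof.
rewrite /valency (eq_bigr (fun z => ind (nzsq (qform z)))) => [|z _]; last by rewrite inE.
by rewrite (sum_qform (fun c => ind (nzsq c)) nvec_n) /nzsq eqxx ind0 mulr0 addr0 mulrC.
Qed.

Lemma nonsq_norms_n : nonsq_norms F n = h * (q * X ^+ 2 + X).
Proof.
rewrite /nonsq_norms (sum_qform (fun c => ind (nonsq c)) nvec_n).
by rewrite /nonsq eqxx ind0 mulr0 addr0 count_nonsq // mulrC.
Qed.

Lemma codeg_row_plane (a : 'rV[F]_2) :
  a != 0 -> codeg (row_mx a (0 : 'rV[F]_(j.*2))) = (X ^+ 2 - X) * h ^+ 2 + X * codeg a.
Proof.
move=> a0; have q0 := cardF_neq0 F.
by rewrite (codeg_row_mx two_neq0 a0 nvec_2j); field.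
Qed.

Definition e_n : 'rV[F]_n := row_mx (e1 F) 0.

Lemma qform_e_n : qform e_n = 1.
Proof. by rewrite qform_row_mx qform_e1 qform0 addr0. Qed.

Lemma codeg_e_n : codeg e_n = lambda.
Proof.
have [b nb] := exists_nonsq_plane two_neq0.
have [codeg_e1 _] := codeg2_values two_neq0 nonsq_m1 nb.
by rewrite codeg_row_plane ?e1_neq0 // codeg_e1; ring.
Qed.

Lemma exists_nonsq_codeg : exists b : 'rV[F]_n, nonsq (qform b) /\ codeg b = mu.
Proof.
have [b nb] := exists_nonsq_plane two_neq0.
have [_ codeg_b] := codeg2_values two_neq0 nonsq_m1 nb.
have b0 : b != 0 by apply: contraTneq nb => ->; rewrite qform0 /nonsq eqxx.
exists (row_mx b 0); rewrite qform_row_mx qform0 addr0 codeg_row_plane // codeg_b.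
by split => //; ring.
Qed.

Lemma codeg_isotropic_value (a : 'rV[F]_n) : a != 0 -> qform a = 0 -> codeg a = mu.
Proof.
move=> a0 qa; have [b [nb codeg_b]] := exists_nonsq_codeg.
pose iso := \sum_(x : 'rV[F]_n) ind ((x != 0) && (qform x == 0)).
have sum_iso : \sum_(x : 'rV[F]_n) ind ((x != 0) && (qform x == 0)) * codeg x = iso * codeg a.
  rewrite /iso mulr_suml; apply: eq_bigr => x _.
  have [/andP[x0 /eqP qx]|_] := boolP ((x != 0) && (qform x == 0)); last by rewrite ind0 !mul0r.
  by rewrite (codeg_isotropic two_neq0 x0 a0 qx qa).
have isoE : iso = q * X ^+ 2 + X - q * X - 1.
  have := nvec_n 0; rewrite eqxx ind1 mulr1 /nvec => <-.
  rewrite [in RHS](eq_bigr (fun x => ind (x == 0) + ind ((x != 0) && (qform x == 0)))) => [|x _].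
    by rewrite big_split /= sum_ind_eq -/iso; ring.
  by have [->|] := eqVneq x 0; rewrite ?qform0 ?eqxx ?ind1 ?ind0 ?add0r ?addr0.
have iso0 : iso != 0.
  apply: lt0r_neq0; rewrite /iso (bigD1 a) //= a0 qa eqxx ind1 ltr_pwDl //.
  by apply: sumr_ge0 => x _; rewrite /ind; case: (_ && _).
have := sum_codeg_classes two_neq0 qform_e_n nb.
rewrite sum_iso valency_n nonsq_norms_n codeg_e_n codeg_b => classes.
apply: (mulfI iso0).
have -> : iso * codeg a = (h * (q * X ^+ 2 + X)) ^+ 2 -
    (h * (q * X ^+ 2 + X) + h * (q * X ^+ 2 + X) * lambda + h * (q * X ^+ 2 + X) * mu).
  by rewrite classes; ring.
by rewrite isoE card_nzsq //; ring.
Qed.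

Lemma codeg_value (a : 'rV[F]_n) : a != 0 -> codeg a = if a \in D then lambda else mu.
Proof.
move=> a0; have [aD|aD] := ifPn.
  by rewrite (codeg_Dset two_neq0 qform_e_n aD) codeg_e_n.
have [qa|qa] := eqVneq (qform a) 0; first exact: codeg_isotropic_value.
have [b [nb <-]] := exists_nonsq_codeg; apply: codeg_nonsq nb _ => //.
by move: aD; rewrite inE /nzsq /nonsq qa.
Qed.

Lemma srg_Dset : let r := (#|F| ^ j * #|F|./2)%N in
  srg (cay_adj D) (#|F| ^ (2 * j.+1)) (r * (#|F| ^ j.+1 + 1))
    (- (#|F| ^ j.+1)%:Z + (r ^ 2)%:Z + (3 * r)%:Z) (r ^ 2 + r)%:Z.
Proof.
move=> r; have rE : r%:R = X * h :> rat.
  by rewrite /r natrM natrX (nzsq_count_half two_neq0).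
clearbody r; have qE := card_nzsq two_neq0.
have qXE : (#|F| ^ j.+1)%:R = q * X by rewrite natrX exprS.
have [b [nb _]] := exists_nonsq_codeg.
have b0 : b != 0 by apply: contraTneq nb => ->; rewrite qform0 /nonsq eqxx.
have e_nD : e_n \in D.
  by rewrite inE qform_e_n /nzsq oner_eq0; apply/is_sqP; exists 1; rewrite expr1n.
split; [|split; [|split; [|split; [|split]]]].
- by rewrite card_mx mul1n mulnS mul2n.
- move=> x; apply/eqP; rewrite -(eqr_nat rat) card_nbhd valency_n.
  by rewrite natrM natrD rE qXE; apply/eqP; ring.
- exists b, 0; rewrite b0 /cay_adj subr0 inE /nzsq.
  by case/andP: nb => _ /negbTE ->; rewrite andbF.
- by exists e_n, 0; rewrite /cay_adj subr0.
- move=> x y xy adj; apply: (@intr_inj rat).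
  rewrite intr_nat card_common_nb codeg_value ?subr_eq0 // (adj : x - y \in D).
  by rewrite !intrD intrN !intr_nat qXE !natrM rE qE; ring.
move=> x y xy nadj; apply: (@intr_inj rat).
rewrite intr_nat card_common_nb codeg_value ?subr_eq0 // (negbTE (nadj : x - y \notin D)).
by rewrite intr_nat natrD natrX rE; ring.
Qed.

End SquareNormGraph.

Lemma odd_of_mod4 q : (q %% 4 = 3)%N -> odd q.
Proof. by move=> q4; rewrite -(odd_mod q (erefl : odd 4 = false)) q4. Qed.

Lemma exists_finField_nonsq_m1 q : prime_power q -> (q %% 4 = 3)%N ->
  exists F : finFieldType, [/\ #|F| = q, (2 : F) != 0 & ~~ is_sq (-1 : F)].
Proof.
move=> [p [e [p_pr [e_gt0 qE]]]] q4; have q_odd := odd_of_mod4 q4.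
have [F pF cardF] := pPrimePowerField p_pr e_gt0; rewrite -qE in cardF.
have two_neq0 : (2 : F) != 0.
  apply/negP => /eqP two0; have : (p %| 2)%N by rewrite (dvdn_pcharf pF) two0.
  rewrite dvdn_prime2 // => /eqP p2.
  by move: q_odd; rewrite qE p2 oddX orbF eqn0Ngt e_gt0.
(* a square root u of -1 would satisfy u = u ^+ q = u ^+ 3 = - u *)
have nonsq_m1 : ~~ is_sq (-1 : F).
  apply/negP => /is_sqP[u u2].
  have u4 : u ^+ 4 = 1 by rewrite (exprM u 2 2) u2 sqrrN expr1n.
  have : u ^+ 3 = u.
    by rewrite -{2}(expf_card u) cardF (divn_eq q 4) q4 exprD mulnC exprM u4 expr1n mul1r.
  rewrite exprS u2 mulrN1 => /eqP; rewrite eq_sym -addr_eq0 -mulr2n -mulr_natl.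
  rewrite mulf_eq0 (negbTE two_neq0) => /eqP u0.
  by move: u2; rewrite u0 expr0n => /eqP; rewrite eq_sym oppr_eq0 oner_eq0.
by exists F.
Qed.

Theorem corollary7p7 (q m : nat) :
  prime_power q -> (q %% 4 = 3)%N -> odd m -> (1 < m)%N ->
  let r : nat := ((q ^ (m - 1) * (q - 1)) %/ 2)%N in
  exists (G : finZmodType) (D : {set G}),
    cayley_set D /\
    srg (cay_adj D) (q ^ (2 * m))%N (r * (q ^ m + 1))%N
        (- (q ^ m)%:Z + (r ^ 2)%:Z + (3 * r)%:Z) ((r ^ 2 + r)%N)%:Z.
Proof.
move=> q_pp q4 m_odd m_gt1 r.
have [F [cardF two_neq0 nonsq_m1]] := exists_finField_nonsq_m1 q_pp q4.
have [j mE] : exists j, m = j.+1 by exists m.-1; rewrite prednK // ltnW.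
have j_even : ~~ odd j by move: m_odd; rewrite mE.
have rE : r = (q ^ j * q./2)%N.
  have q1 : (q - 1 = q./2.*2)%N.
    by rewrite -{1}(odd_double_half q) (odd_of_mod4 q4) add1n subn1.
  by rewrite /r mE subn1 q1 -muln2 mulnA mulnK.
rewrite rE mE -cardF.
exists ('rV[F]_(2 + j.*2) : finZmodType), (Dset F (2 + j.*2)).
by split; [exact: cayley_set_Dset | exact: srg_Dset].
Qed.
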